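(* Let $\nu\ge 0$, $0\le a<b$ and $d>0$. Then $$\int_{a}^b u^{\nu}e^{-du}\,du \stackrel c \approx b^\nu\left(\frac{a+\frac 1d}{b+\frac 1d}\right)^\nu e^{-ad}\,\frac {b-a} {d(b-a)+1},$$ where the comparability constant $c$ depends only on $\nu$.
   Context: $f\stackrel c\approx g$ means $c^{-1}g\le f\le cg$ for all indicated values of the variables, with $c>0$ depending only on the stated parameters. *)

From HB Require Import structures.
From mathcomp Require Import all_boot all_order all_algebra.
From mathcomp Require Import all_classical all_reals all_analysis.
Set Implicit Arguments. Unset Strict Implicit. Unset Printing Implicit Defensive.
Import Order.TTheory GRing.Theory Num.Theory.
Local Open Scope classical_set_scope.
Local Open Scope ring_scope.

Definition gamma_piece (R : realType) (nu a b d : R) : R :=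
  Rintegral (@lebesgue_measure R) `[a, b] (fun u : R => u `^ nu * expR (- (d * u))).

Definition gamma_piece_approx (R : realType) (nu a b d : R) : R :=
  b `^ nu * ((a + d^-1) / (b + d^-1)) `^ nu * expR (- (a * d))
    * ((b - a) / (d * (b - a) + 1)).

From HB Require Import structures.
From mathcomp Require Import all_boot all_order all_algebra.
From mathcomp Require Import all_classical all_reals all_analysis.
From mathcomp Require Import ring lra measurable_realfun.
Set Implicit Arguments. Unset Strict Implicit. Unset Printing Implicit Defensive.
Import Order.TTheory GRing.Theory Num.Theory.
Import numFieldTopology.Exports.
Local Open Scope classical_set_scope.
Local Open Scope ring_scope.

(* Put m := min (b - a) (1/d); the integrand is essentially concentrated on
   [a, a + m].  Both factors of the comparison function are within a factor 2 of
   a + m and m respectively, so it is comparable to (a + m)^nu e^{-ad} m.  From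
   below, on [a + m/2, a + m] one has u^nu >= ((a + m)/2)^nu and
   e^{-du} >= e^{-ad-1}.  From above, u <= (a + m)(1 + d(u - a)) and
   (1 + t)^nu <= (1 + 2 nu)^nu e^{t/2} dominate the integrand on [a, b] by
   (1 + 2 nu)^nu (a + m)^nu e^{-ad} e^{-d(u - a)/2}, whose integral is at most
   min (b - a) (2/d) <= 2m times the prefactor. *)

Lemma comparable_sandwich (R : realFieldType) (p q r x g f : R) :
  0 < p -> 0 < q -> 0 <= r -> 0 <= x ->
  p * x <= g -> g <= x -> q * x <= f -> f <= r * x ->
  (r / p + q^-1)^-1 * g <= f /\ f <= (r / p + q^-1) * g.
Proof.
move=> p0 q0 r0 x0 pxg gx qxf frx; set c := r / p + q^-1.
have g0 : 0 <= g by apply: le_trans pxg; rewrite mulr_ge0 ?(ltW p0).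
have f0 : 0 <= f by apply: le_trans qxf; rewrite mulr_ge0 ?(ltW q0).
have rp0 : 0 <= r / p by rewrite divr_ge0 ?(ltW p0).
have c_ge : q^-1 <= c by rewrite lerDr.
have c0 : 0 < c by apply: lt_le_trans c_ge; rewrite invr_gt0.
split.
  rewrite mulrC ler_pdivrMr// (le_trans gx)// (le_trans _ (ler_wpM2l f0 c_ge))//.
  by rewrite ler_pdivlMr// mulrC.
apply: (le_trans frx); apply: (@le_trans _ _ (r / p * g)).
  have -> : r * x = r / p * (p * x) by rewrite mulrA divfK // lt0r_neq0.
  exact: ler_wpM2l.
by rewrite ler_wpM2r// lerDl invr_ge0 (ltW q0).
Qed.

Section Segment_integrals.
Context {R : realType}.
Notation mu := (@lebesgue_measure R).

Lemma continuous_itv_integrable (f : R -> R) (p q : R) :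
  continuous f -> mu.-integrable `[p, q] (EFin \o f).
Proof.
move=> cf; apply: continuous_compact_integrable; first exact: segment_compact.
exact: continuous_subspaceT.
Qed.

Lemma integrable_itv_cst (c p q : R) : mu.-integrable `[p, q] (EFin \o cst c).
Proof. exact/continuous_itv_integrable/cst_continuous. Qed.

Lemma Rintegral_itv_cst (c p q : R) : p <= q ->
  \int[mu]_(x in `[p, q]) c = c * (q - p).
Proof.
move=> pq; rewrite Rintegral_cst//; congr (_ * _).
have /= -> := lebesgue_measure_itv `[p, q].
rewrite lte_fin; case: ltP => [_|qp]; first by rewrite -EFinD.
by rewrite (@le_anti _ _ q p) ?qp ?subrr.
Qed.

Lemma le_Rintegral_subitv (f : R -> R) (p q p' q' : R) :
  p <= p' -> q' <= q -> (forall x, 0 <= f x) ->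
  mu.-integrable `[p, q] (EFin \o f) ->
  \int[mu]_(x in `[p', q']) f x <= \int[mu]_(x in `[p, q]) f x.
Proof.
move=> pp' q'q f0 fi.
have sub : `[p', q'] `<=` `[p, q] by apply: subset_itv; rewrite bnd_simp.
rewrite /Rintegral fine_le//.
- by apply: integrable_fin_num => //; exact: integrableS fi.
- exact: integrable_fin_num.
- by apply: ge0_subset_integral => // [|x _]; [case/integrableP: fi|rewrite lee_fin].
Qed.

Lemma continuous_expRNM (k : R) : continuous (fun x : R => expR (- (k * x))).
Proof.
move=> x; apply: continuous_comp; last exact: continuous_expR.
apply: (@continuousN _ R^o).
by apply: continuousM => //; exact: cst_continuous.
Qed.

Lemma Rintegral_expRNM (k p q : R) : 0 < k -> p < q ->
  \int[mu]_(x in `[p, q]) expR (- (k * x)) =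
  (expR (- (k * p)) - expR (- (k * q))) / k.
Proof.
move=> k0 pq.
rewrite /Rintegral (@continuous_FTC2 _ _ (fun x => - (k^-1 * expR (- (k * x))))) //=.
- by rewrite opprK addrC -mulrBr mulrC.
- exact/continuous_subspaceT/continuous_expRNM.
- split.
  + by move=> z _; exact: ex_derive.
  + apply/cvg_at_right_filter; apply: cvgN; apply: cvgM; first exact: cvg_cst.
    exact: continuous_expRNM.
  + apply/cvg_at_left_filter; apply: cvgN; apply: cvgM; first exact: cvg_cst.
    exact: continuous_expRNM.
- move=> z _.
  rewrite derive1E deriveN// deriveZ//= -derive1E derive1_comp//.
  rewrite derive1E; have /funeqP -> := @derive_expR R.
  rewrite derive1N// derive1E deriveZ// derive_id.
  change (- (k^-1 * (expR (- (k * z)) * - (k * 1))) = expR (- (k * z))).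
  by rewrite mulr1 !mulrN opprK mulrCA mulVf ?mulr1 ?gt_eqF.
Qed.

Lemma Rintegral_expRNM_le (k p q : R) : 0 < k -> p < q ->
  \int[mu]_(x in `[p, q]) expR (- (k * x)) <=
  expR (- (k * p)) * Num.min (q - p) k^-1.
Proof.
move=> k0 pq; rewrite minr_pMr ?expR_ge0// le_min; apply/andP; split.
  rewrite -Rintegral_itv_cst ?(ltW pq)//; apply: le_Rintegral => //.
  - exact/continuous_itv_integrable/continuous_expRNM.
  - exact: integrable_itv_cst.
  - move=> x /=; rewrite in_itv/= => /andP[px _].
    by rewrite ler_expR lerN2 ler_pM2l.
by rewrite Rintegral_expRNM// ler_pM2r ?invr_gt0// gerBl expR_ge0.
Qed.

End Segment_integrals.

Section Gamma_piece.
Context {R : realType}.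
Notation mu := (@lebesgue_measure R).
Implicit Types nu a b d t u : R.

Lemma powR1D_le nu t : 0 <= nu -> 0 <= t ->
  (1 + t) `^ nu <= (1 + 2 * nu) `^ nu * expR (t / 2).
Proof.
move=> nu0 t0; set M := 1 + 2 * nu.
have M1 : 1 <= M by rewrite /M; lra.
have M0 : 0 < M by lra.
have tM : 1 + t <= M * expR (t / M).
  have := expR_ge1Dx (t / M).
  rewrite -(ler_pM2l M0) mulrDr mulr1 mulrCA divff ?gt_eqF// mulr1; lra.
apply: (le_trans (ge0_ler_powR nu0 _ _ tM)); rewrite ?nnegrE; try lra.
rewrite powRM ?expR_ge0 ?(ltW M0)// -expRM ler_pM2l ?powR_gt0// ler_expR.
rewrite mulrAC ler_pdivrMr// /M; nra.
Qed.

Definition gamma_len a b d := Num.min (b - a) d^-1.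

Definition gamma_scale nu a b d :=
  (a + gamma_len a b d) `^ nu * expR (- (a * d)) * gamma_len a b d.

Lemma gamma_len_ge0 a b d : a <= b -> 0 <= d -> 0 <= gamma_len a b d.
Proof. by move=> ab d0; rewrite le_min subr_ge0 ab invr_ge0. Qed.

Lemma gamma_scale_ge0 nu a b d : a <= b -> 0 <= d -> 0 <= gamma_scale nu a b d.
Proof.
by move=> ab d0; rewrite /gamma_scale !mulr_ge0 ?powR_ge0 ?expR_ge0 ?gamma_len_ge0.
Qed.

Lemma le_gamma_len_mul1D a b d u : 0 <= a -> 0 < d -> a <= u -> u <= b ->
  u <= (a + gamma_len a b d) * (1 + d * (u - a)).
Proof.
move=> a0 d0 au ub; set m := gamma_len a b d.
have t0 : 0 <= d * (u - a) by rewrite mulr_ge0 ?subr_ge0 ?(ltW d0).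
have um : u - a <= m * (1 + d * (u - a)).
  rewrite /m /gamma_len minr_pMl ?addr_ge0// le_min; apply/andP; split; first nra.
  by rewrite mulrDr mulr1 mulrA mulVf ?gt_eqF// mul1r lerDr invr_ge0 ltW.
have at0 : 0 <= a * (d * (u - a)) by rewrite mulr_ge0.
by rewrite mulrDl; lra.
Qed.

Lemma approx_base_bounds a b d : 0 <= a -> a < b -> 0 < d ->
  (a + gamma_len a b d) / 2 <= b * ((a + d^-1) / (b + d^-1)) <= a + gamma_len a b d.
Proof.
move=> a0 ab d0; rewrite /gamma_len; set D := d^-1.
have D0 : 0 < D by rewrite invr_gt0.
have bD : 0 < b + D by lra.
rewrite mulrA ler_pdivlMr// ler_pdivrMr// mulrAC ler_pdivrMr//.
have [ba_le|D_lt] := leP (b - a) D.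
  rewrite addrC subrK.
  have h1 : 0 <= b * (2 * a + D - b) by rewrite mulr_ge0 //; lra.
  have h2 : 0 <= b * (b - a) by rewrite mulr_ge0 //; lra.
  apply/andP; split; nra.
have h1 : 0 <= (a + D) * (b - D) by rewrite mulr_ge0 //; lra.
have h2 : 0 <= (a + D) * D by rewrite mulr_ge0 //; lra.
apply/andP; split; nra.
Qed.

Lemma approx_len_bounds a b d : a < b -> 0 < d ->
  gamma_len a b d / 2 <= (b - a) / (d * (b - a) + 1) <= gamma_len a b d.
Proof.
move=> ab d0; rewrite /gamma_len.
have dba0 : 0 <= d * (b - a) by rewrite mulr_ge0 //; lra.
have p : 0 < d * (b - a) + 1 by lra.
rewrite ler_pdivlMr// ler_pdivrMr// mulrAC ler_pdivrMr//.
have [ba_le|d_lt] := leP (b - a) d^-1.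
  have dba1 : d * (b - a) <= 1 by rewrite -(mulfV (lt0r_neq0 d0)) ler_pM2l.
  by apply/andP; split; nra.
rewrite mulrDr mulr1 mulrA mulVf ?gt_eqF// mul1r.
have D0 : 0 < d^-1 by rewrite invr_gt0.
by apply/andP; split; lra.
Qed.

Definition gamma_integrand nu d u := u `^ nu * expR (- (d * u)).

Lemma gamma_pieceE nu a b d :
  gamma_piece nu a b d = \int[mu]_(u in `[a, b]) gamma_integrand nu d u.
Proof. by []. Qed.

Lemma gamma_integrand_ge0 nu d u : 0 <= gamma_integrand nu d u.
Proof. by rewrite mulr_ge0 ?powR_ge0 ?expR_ge0. Qed.

Lemma measurable_gamma_integrand nu d : measurable_fun setT (gamma_integrand nu d).
Proof.
apply: measurable_funM => //.
exact: continuous_measurable_fun (@continuous_expRNM R d).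
Qed.

Lemma integrable_gamma_integrand nu d p q : 0 <= nu -> 0 <= p -> 0 <= d ->
  mu.-integrable `[p, q] (EFin \o gamma_integrand nu d).
Proof.
move=> nu0 p0 d0.
apply: (le_integrable _ _ _ (integrable_itv_cst (q `^ nu) p q)) => //.
- by apply/measurable_EFinP; apply: measurable_funTS; exact: measurable_gamma_integrand.
- move=> x /=; rewrite in_itv/= => /andP[px xq].
  rewrite lee_fin ger0_norm ?gamma_integrand_ge0// ger0_norm ?powR_ge0//.
  rewrite -[leRHS]mulr1 ler_pM ?powR_ge0 ?expR_ge0//.
    by apply: ge0_ler_powR => //; rewrite nnegrE; lra.
  by rewrite expR_le1 oppr_le0 mulr_ge0//; lra.
Qed.

Lemma gamma_integrand_le nu a b d u : 0 <= nu -> 0 <= a -> 0 < d ->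
  a <= u -> u <= b ->
  gamma_integrand nu d u <= (1 + 2 * nu) `^ nu * (a + gamma_len a b d) `^ nu
    * expR (- (a * d / 2)) * expR (- (d / 2 * u)).
Proof.
move=> nu0 a0 d0 au ub; set m := gamma_len a b d.
have m0 : 0 <= m := gamma_len_ge0 (le_trans au ub) (ltW d0).
have t0 : 0 <= d * (u - a) by rewrite mulr_ge0 ?subr_ge0 ?(ltW d0).
have uM : u `^ nu <= (a + m) `^ nu * ((1 + 2 * nu) `^ nu * expR (d * (u - a) / 2)).
  have := le_gamma_len_mul1D a0 d0 au ub; rewrite -/m => um.
  apply: (le_trans (ge0_ler_powR nu0 _ _ um)).
  - by rewrite nnegrE; lra.
  - by rewrite nnegrE mulr_ge0; lra.
  by rewrite powRM ?ler_wpM2l ?powR_ge0 ?powR1D_le//; lra.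
rewrite [leRHS](_ : _ = (a + m) `^ nu * ((1 + 2 * nu) `^ nu
    * expR (d * (u - a) / 2)) * expR (- (d * u))); last first.
  by rewrite -!mulrA -!expRD mulrCA; do 2 congr (_ * _); congr expR; field.
by rewrite /gamma_integrand ler_wpM2r ?expR_ge0.
Qed.

Lemma gamma_piece_le nu a b d : 0 <= nu -> 0 <= a -> a < b -> 0 < d ->
  gamma_piece nu a b d <= 2 * (1 + 2 * nu) `^ nu * gamma_scale nu a b d.
Proof.
move=> nu0 a0 ab d0; set m := gamma_len a b d.
set C := (1 + 2 * nu) `^ nu * (a + m) `^ nu * expR (- (a * d / 2)).
have C0 : 0 <= C by rewrite !mulr_ge0 ?powR_ge0 ?expR_ge0.
have k0 : 0 < d / 2 by rewrite divr_gt0.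
have len2 : Num.min (b - a) (d / 2)^-1 <= 2 * m.
  rewrite /m /gamma_len minr_pMr// le_min !ge_min invf_div lexx orbT andbT.
  by rewrite ler_peMl ?subr_ge0 ?(ltW ab)// ler1n.
have -> : 2 * (1 + 2 * nu) `^ nu * gamma_scale nu a b d =
    C * (expR (- (d / 2 * a)) * (2 * m)).
  rewrite /C /gamma_scale -/m.
  have -> : expR (- (a * d)) = expR (- (a * d / 2)) * expR (- (d / 2 * a)).
    by rewrite -expRD; congr expR; field.
  ring.
have cexp : continuous (fun x => C * expR (- (d / 2 * x))).
  move=> x; apply: (@continuousM _ R^o (fun=> C) (fun x => expR (- (d / 2 * x)))).
    exact: cst_continuous.
  exact: continuous_expRNM.
apply: (@le_trans _ _ (\int[mu]_(x in `[a, b]) (C * expR (- (d / 2 * x))))).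
  apply: le_Rintegral => //.
  - exact: integrable_gamma_integrand (ltW d0).
  - exact: continuous_itv_integrable.
  - move=> x /=; rewrite in_itv/= => /andP[ax xb].
    exact: gamma_integrand_le.
rewrite RintegralZl//; last exact/continuous_itv_integrable/continuous_expRNM.
apply: ler_wpM2l => //; apply: le_trans (Rintegral_expRNM_le k0 ab) _.
by rewrite ler_wpM2l ?expR_ge0.
Qed.

Lemma gamma_piece_ge nu a b d : 0 <= nu -> 0 <= a -> a < b -> 0 < d ->
  2^-1 `^ nu / (2 * expR 1) * gamma_scale nu a b d <= gamma_piece nu a b d.
Proof.
move=> nu0 a0 ab d0; set m := gamma_len a b d.
have m0 : 0 <= m := gamma_len_ge0 (ltW ab) (ltW d0).
have mba : m <= b - a by rewrite /m /gamma_len ge_min lexx.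
have dm1 : d * m <= 1.
  have : m <= d^-1 by rewrite /m /gamma_len ge_min lexx orbT.
  by rewrite -(ler_pM2l d0) mulfV ?gt_eqF.
set C := ((a + m) / 2) `^ nu * (expR (- (a * d)) * expR (-1)).
have -> : 2^-1 `^ nu / (2 * expR 1) * gamma_scale nu a b d =
    C * ((a + m) - (a + m / 2)).
  rewrite /C /gamma_scale -/m powRM ?invr_ge0// ?expRN; last lra.
  by field; rewrite ?expR_eq0.
rewrite gamma_pieceE -Rintegral_itv_cst; last lra.
apply: (@le_trans _ _ (\int[mu]_(u in `[a + m / 2, a + m]) gamma_integrand nu d u));
  last first.
  apply: le_Rintegral_subitv; [lra | lra | exact: gamma_integrand_ge0 |].
  exact: integrable_gamma_integrand b nu0 a0 (ltW d0).
apply: le_Rintegral => //.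
- exact: integrable_itv_cst.
- by apply: integrable_gamma_integrand (a + m) nu0 _ (ltW d0); lra.
move=> x /=; rewrite in_itv/= => /andP[x1 x2].
rewrite /gamma_integrand ler_pM ?powR_ge0 ?mulr_ge0 ?expR_ge0//.
  by apply: ge0_ler_powR => //; rewrite ?nnegrE; lra.
rewrite -expRD ler_expR.
have : d * x <= d * (a + m) by rewrite ler_pM2l.
nra.
Qed.

Lemma gamma_piece_approx_bounds nu a b d : 0 <= nu -> 0 <= a -> a < b -> 0 < d ->
  2^-1 `^ nu / 2 * gamma_scale nu a b d <= gamma_piece_approx nu a b d
    <= gamma_scale nu a b d.
Proof.
move=> nu0 a0 ab d0; have m0 := gamma_len_ge0 (ltW ab) (ltW d0).
have /andP[s_ge s_le] := approx_base_bounds a0 ab d0.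
have /andP[w_ge w_le] := approx_len_bounds ab d0.
rewrite /gamma_piece_approx /gamma_scale -powRM; last 2 first.
- exact: ltW (le_lt_trans a0 ab).
- by rewrite divr_ge0 ?addr_ge0 ?invr_ge0 ?(ltW d0) ?(ltW (le_lt_trans a0 ab)).
move: (gamma_len a b d) (b * _) ((b - a) / _) m0 s_ge s_le w_ge w_le.
move=> m s w m0 s_ge s_le w_ge w_le; apply/andP; split.
  have -> : 2^-1 `^ nu / 2 * ((a + m) `^ nu * expR (- (a * d)) * m) =
      ((a + m) / 2) `^ nu * expR (- (a * d)) * (m / 2).
    by rewrite [in RHS]powRM; [ring | lra | rewrite invr_ge0].
  apply: ler_pM; rewrite ?mulr_ge0 ?powR_ge0 ?expR_ge0 ?ler_wpM2r ?expR_ge0//; try lra.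
  by apply: ge0_ler_powR => //; rewrite nnegrE; lra.
apply: ler_pM; rewrite ?mulr_ge0 ?powR_ge0 ?expR_ge0 ?ler_wpM2r ?expR_ge0//; try lra.
by apply: ge0_ler_powR => //; rewrite nnegrE; lra.
Qed.

End Gamma_piece.

Theorem mainTheorem10 (R : realType) (nu : R) (hnu : 0 <= nu) :
  exists c : R, 0 < c /\
    forall a b d : R, 0 <= a -> a < b -> 0 < d ->
      c^-1 * gamma_piece_approx nu a b d <= gamma_piece nu a b d /\
      gamma_piece nu a b d <= c * gamma_piece_approx nu a b d.
Proof.
set K := (1 + 2 * nu) `^ nu; set h := 2^-1 `^ nu.
have h0 : 0 < h by rewrite powR_gt0.
have he0 : 0 < h / (2 * expR 1) by rewrite divr_gt0 ?mulr_gt0 ?expR_gt0.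
have K2 : 0 <= 2 * K by rewrite mulr_ge0 ?powR_ge0.
exists (2 * K / (h / 2) + (h / (2 * expR 1))^-1); split.
  by rewrite ltr_wpDl ?divr_ge0 ?invr_gt0// ltW.
move=> a b d a0 ab d0.
have /andP[approx_ge approx_le] := gamma_piece_approx_bounds hnu a0 ab d0.
apply: comparable_sandwich approx_ge approx_le
  (gamma_piece_ge hnu a0 ab d0) (gamma_piece_le hnu a0 ab d0) => //.
exact: gamma_scale_ge0 (ltW ab) (ltW d0).
Qed.
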